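(* Let $n\ge 1$ and let $K=(\beta(\mathbb{Z}^n)\times \mathbb{I}^n)/h$, with $\mathbb{I}=[0,1]$ and $h$ the equivalence relation described in the context. Define $\sigma:\mathbb{R}^n\times K\to K$ by $$\sigma\big(\vec{x},[(p,\vec{i})]_h\big)=\big[\big(h_{[\vec{x}]+N}(p),\ \vec{i}+\{\vec{x}\}-N\big)\big]_h,$$ where $[\vec{x}]\in\mathbb{Z}^n$ is the coordinatewise integer part of $\vec{x}$, $\{\vec{x}\}=\vec{x}-[\vec{x}]\in[0,1)^n$, and $N\in\{0,1\}^n$ has $N_k=1$ if $i_k+\{\vec{x}\}_k\ge 1$ and $N_k=0$ otherwise. Then $\big(\mathbb{R}^n, K, \sigma; [(0,\mathbf{0})]_h\big)$ is an ambit, i.e. $\sigma$ is a well-defined continuous action of the additive group $\mathbb{R}^n$ (Euclidean topology) on the compact Hausdorff space $K$, and the orbit of $[(0,\mathbf{0})]_h$ (with $0\in\mathbb{Z}^n\subseteq\beta(\mathbb{Z}^n)$ and $\mathbf{0}$ the zero vector of $\mathbb{I}^n$) is dense in $K$.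
   Context: $\beta(\mathbb{Z}^n)$ is the Čech–Stone compactification of the discrete group $\mathbb{Z}^n$. For $N\in\mathbb{Z}^n$, $h_N:\beta(\mathbb{Z}^n)\to\beta(\mathbb{Z}^n)$ denotes the continuous extension of the translation $\vec{z}\mapsto\vec{z}+N$ of $\mathbb{Z}^n$; write $h_1,\dots,h_n$ for $h_{e_1},\dots,h_{e_n}$. For $A\subseteq\{1,\dots,n\}$ let $\mathbf{1}_A\in\{0,1\}^n$ be its indicator vector, and for $\vec{i}\in\mathbb{I}^n$ let $\psi_A(\vec{i})$ be obtained from $\vec{i}$ by changing, for each $a\in A$, the coordinate $i_a$ to $0$ if $i_a=1$ and to $1$ if $i_a=0$. The equivalence relation $h$ on $\beta(\mathbb{Z}^n)\times\mathbb{I}^n$ identifies $(p,\vec{i})$ with $(h_{\mathbf{1}_A}(p),\psi_A(\vec{i}))$ whenever $A\subseteq\{j: i_j=1\}$ (and hence, symmetrically, identifies $(p,\vec i)$ with $(h_{-\mathbf{1}_B}(p),\psi_B(\vec i))$ for $B\subseteq\{j:i_j=0\}$); $[\cdot]_h$ denotes equivalence classes. Restricted to $\mathbb{Z}^n\times\mathbb{I}^n$ the quotient is homeomorphic to $\mathbb{R}^n$ via $[(\vec z,\vec i)]_h\mapsto \vec z+\vec i$. A dynamical system $(G,X,\pi)$ is a topological group $G$ acting continuously on a compact Hausdorff space $X$; an ambit $(G,X,\pi;x)$ is a dynamical system together with a point $x$ whose orbit $\{\pi(g,x):g\in G\}$ is dense in $X$. *)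

From HB Require Import structures.
From Stdlib Require Import Relations.
From mathcomp Require Import all_boot all_order all_algebra.
From mathcomp Require Import all_classical all_reals all_analysis.
Set Implicit Arguments. Unset Strict Implicit. Unset Printing Implicit Defensive.
Import Order.TTheory GRing.Theory Num.Theory.
Import numFieldNormedType.Exports.
Local Open Scope classical_set_scope.
Local Open Scope ring_scope.

(* Z^n is 'rV[int]_n (discrete), R^n is 'rV[R]_n (product = Euclidean topology). *)

Definition is_stone_cech (X : Type) (B : topologicalType) (e : X -> B) : Prop :=
  [/\ compact [set: B], hausdorff_space B, injective e,
      dense (range e) &
      forall (Y : topologicalType), compact [set: Y] -> hausdorff_space Y ->
        forall f : X -> Y, exists g : B -> Y, continuous g /\ g \o e = f].

Definition ind_vec (n : nat) (A : {set 'I_n}) : 'rV[int]_n :=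
  \row_j (j \in A)%:Z.

Definition psi (R : realType) (n : nat) (A : {set 'I_n}) (i : 'rV[R]_n) : 'rV[R]_n :=
  \row_j (if j \in A then 1 - i 0 j else i 0 j).

Definition cube (R : realType) (n : nat) : set 'rV[R]_n :=
  [set i | forall j, 0 <= i 0 j <= 1].

Definition h_basic (R : realType) (n : nat) (B : Type)
  (hN : 'rV[int]_n -> B -> B) : relation (B * 'rV[R]_n) :=
  fun z w => exists A : {set 'I_n},
    (forall j, j \in A -> z.2 0 j = 1) /\ w.1 = hN (ind_vec A) z.1 /\ w.2 = psi A z.2.

Definition h_rel (R : realType) (n : nat) (B : Type)
  (hN : 'rV[int]_n -> B -> B) : relation (B * 'rV[R]_n) :=
  clos_refl_sym_trans _ (h_basic hN).

Definition ipart (R : realType) (n : nat) (x : 'rV[R]_n) : 'rV[int]_n :=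
  \row_j Num.floor (x 0 j).
Definition fpart (R : realType) (n : nat) (x : 'rV[R]_n) : 'rV[R]_n :=
  x - map_mx (fun z : int => z%:~R) (ipart x).
Definition carry (R : realType) (n : nat) (x i : 'rV[R]_n) : 'rV[int]_n :=
  \row_j (1 <= i 0 j + fpart x 0 j)%R%:Z.

(* K is the quotient (B x I^n)/h with quotient map q: q is onto K from
   B x I^n, identifies exactly h-equivalent points, and K carries the quotient
   topology of the subspace B x I^n of B x R^n. *)
Definition is_h_quotient (R : realType) (n : nat) (B : topologicalType)
  (hN : 'rV[int]_n -> B -> B) (K : topologicalType) (q : B * 'rV[R]_n -> K) : Prop :=
  let D := [set z : B * 'rV[R]_n | cube z.2] in
  [/\ (forall k : K, exists2 z, D z & q z = k),
      (forall z w, D z -> D w -> (q z = q w <-> h_rel hN z w)) &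
      (forall U : set K, open U <->
         exists V : set (B * 'rV[R]_n), open V /\ V `&` D = D `&` (q @^-1` U))].

From Stdlib Require Import Relations.
From mathcomp Require Import all_boot all_order all_algebra.
From mathcomp Require Import all_classical all_reals all_analysis.
From mathcomp Require Import lra zify.
Import Order.TTheory GRing.Theory Num.Theory.
Import numFieldNormedType.Exports.
Local Open Scope classical_set_scope.
Local Open Scope ring_scope.

(* The map [qext (p, t) := q (h_[t] p, {t})] extends [q] from [B × I^n] to
   [B × R^n] and is invariant under [(p, t) ↦ (h_c p, t - c)] for integral [c],
   because two points of the cube differing by an integral vector differ by a
   vector of entries in {-1, 0, 1} and are identified by [h].  Translation in
   the second factor therefore descends to an action [sigma] of [R^n] on [K].
   Near any point, [qext] is [q] composed with one of finitely many continuous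
   charts [(p, t) ↦ (h_c p, t - c)], each defined on a closed set, so [qext] is
   continuous; compactness of [B × I^n] then gives compactness of [K] and joint
   continuity of [sigma].  Products of continuous functions on [B] with bumps
   supported inside the open cube descend to [K]; after translating one point to
   the centre of the cube they separate points, so [K] is Hausdorff.  Finally the
   orbit of [[(0, 0)]] contains [q (e(Z^n) × I^n)], which is dense. *)

Lemma dense_continuous_eq {T Y : topologicalType} {S : set T} {f g : T -> Y} :
  hausdorff_space Y -> dense S -> continuous f -> continuous g ->
  (forall x, S x -> f x = g x) -> f =1 g.
Proof.
move=> hY dS cf cg fgS x; apply: hY => A C nA nC.
have : nbhs x (f @^-1` A `&` g @^-1` C) by apply: filterI; [exact: cf | exact: cg].
rewrite nbhsE => -[W [oW Wx] WAC].
have [y [Wy Sy]] := dS W (ex_intro _ x Wx) oW.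
have [Ay Cy] := WAC y Wy.
by exists (f y); split; rewrite // fgS.
Qed.

Lemma separating_hausdorff {T Y : topologicalType} : hausdorff_space Y ->
  (forall x y : T, x <> y -> exists2 f : T -> Y, continuous f & f x <> f y) ->
  hausdorff_space T.
Proof.
move=> hY sep x y cxy; apply: contrapT => /sep[f cf]; apply; apply: hY => A C nA nC.
have [w [Aw Cw]] := cxy _ _ (cf x _ nA) (cf y _ nC).
by exists (f w).
Qed.

Lemma compact_hausdorff_separating (R : realType) {T : topologicalType} :
  compact [set: T] -> hausdorff_space T ->
  forall x y : T, x <> y -> exists2 f : T -> R, continuous f & f x <> f y.
Proof.
move=> cT hT x y xy.
have crT : completely_regular_space T.
  exact: normal_completely_regular (compact_normal hT cT) (hausdorff_accessible hT).
have sep : uniform_separator [set x] [set y].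
  by apply: crT; [exact: accessible_closed_set1 (hausdorff_accessible hT) y | exact: xy].
exists (Urysohn [set x] [set y]); first exact: Urysohn_continuous.
have /= -> := Urysohn_sub0 sep (imageP _ (erefl x)).
have /= -> := Urysohn_sub1 sep (imageP _ (erefl y)).
by move/eqP; rewrite eq_sym oner_eq0.
Qed.

Lemma finite_closed_cover_continuous_at (T U : topologicalType) (I : finType)
    (C : I -> set T) (f : T -> U) (x : T) :
  (forall i, closed (C i)) -> (forall i, {within C i, continuous f}) ->
  (\forall y \near x, exists i, C i y) -> {for x, continuous f}.
Proof.
move=> clC cfC cover W /= nW.
have near_each i : \forall y \near x, C i y -> W (f y).
  have [Cix|nCix] := pselect (C i x).
    by move/subspace_continuousP: (cfC i) => /(_ x Cix W nW).
  have : nbhs x (~` C i) by apply: open_nbhs_nbhs; split => //; exact: closed_openC.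
  by apply: filterS => y nCy /nCy.
suff : \forall y \near x, W (f y) by [].
near=> y; have [i Ciy] : exists i, C i y by near: y.
suff : forall j, C j y -> W (f y) by move/(_ i Ciy).
by near: y; exact: filter_forall.
Unshelve. all: by end_near. Qed.

Lemma continuous_within_comp {T U V : topologicalType} {A : set T} {E : set U}
    {f : T -> U} {g : U -> V} :
  continuous f -> (forall x, A x -> E (f x)) -> {within E, continuous g} ->
  {within A, continuous (g \o f)}.
Proof.
move=> cf fAE cg; apply/subspace_continuousP => x Ax W nW.
have /cf nWg : nbhs (f x) (fun y => E y -> W (g y)).
  by move/subspace_continuousP: cg => /(_ (f x) (fAE x Ax) W nW).
suff : \forall y \near x, A y -> W (g (f y)) by [].
near=> y => Ay.
by have /(_ (fAE y Ay)) : E (f y) -> W (g (f y)) by near: y.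
Unshelve. all: by end_near. Qed.

Lemma mx_entry_norm_le {K : numDomainType} {m n} (A : 'M[K]_(m, n)) i j :
  `|A i j| <= `|A|.
Proof.
rewrite -[`|A|]/(mx_norm A) mx_normE -[leLHS]nngE num_le.
exact: (le_bigmax _ (fun ij : 'I_m * 'I_n => `|A ij.1 ij.2|%:nng) (i, j)).
Qed.

Lemma int_shift_unit_interval (R : realFieldType) (t : R) (c : int) :
  0 <= t <= 1 -> 0 <= t - c%:~R <= 1 -> c = -1 \/ c = 0 \/ c = 1.
Proof.
move=> /andP[t0 t1] /andP[u0 u1].
have c_le1 : c <= 1 by rewrite -(ler_int R); lra.
have c_ge1 : -1 <= c by rewrite -(ler_int R) intrN; lra.
lia.
Qed.

(** * Quotient of a subspace *)

Section Quotient.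
Context {Z K : topologicalType} {D : set Z} {q : Z -> K}.
Hypothesis q_onto : forall k, exists2 z, D z & q z = k.
Hypothesis q_open : forall U : set K,
  open U <-> exists V : set Z, open V /\ V `&` D = D `&` q @^-1` U.

Lemma quotient_within_continuous : {within D, continuous q}.
Proof.
apply/continuousP => U oU; apply/open_subspaceP.
have [V [oV VD]] := (q_open U).1 oU.
by exists V => //; rewrite VD setIC.
Qed.

Lemma continuous_of_quotient {Y : topologicalType} (F : K -> Y) :
  {within D, continuous (F \o q)} -> continuous F.
Proof.
move=> cFq; apply/continuousP => A oA; apply/q_open.
have /open_subspaceP[V oV VD] := (continuousP _).1 cFq A oA.
by exists V; split => //; rewrite VD setIC.
Qed.

Lemma quotient_compact : compact D -> compact [set: K].
Proof.
move=> cD; have -> : [set: K] = q @` D.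
  by apply/seteqP; split => // k _; have [z Dz <-] := q_onto k; exists z.
exact: continuous_compact quotient_within_continuous cD.
Qed.

Definition qrep (k : K) : Z := s2val (cid2 (q_onto k)).

Lemma qrepP k : D (qrep k).
Proof. by rewrite /qrep; case: cid2. Qed.

Lemma qrepK k : q (qrep k) = k.
Proof. by rewrite /qrep; case: cid2. Qed.

Lemma continuous_qrep_comp {Y : topologicalType} (G : Z -> Y) :
  {within D, continuous G} ->
  (forall z w, D z -> D w -> q z = q w -> G z = G w) ->
  continuous (G \o qrep) /\ forall z, D z -> G (qrep (q z)) = G z.
Proof.
move=> cG Gq; have GqE z : D z -> G (qrep (q z)) = G z.
  by move=> Dz; apply: Gq; rewrite ?qrepK //; exact: qrepP.
split => //; apply: continuous_of_quotient.
by apply: subspace_eq_continuous cG => z /set_mem /GqE.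
Qed.

Lemma cluster_qrep (F : set_system K) (k : K) (z : Z) : Filter F ->
  hausdorff_space K -> F --> k -> D z -> cluster (qrep @ F) z -> q z = k.
Proof.
move=> FF hK Fk Dz clz; apply: hK => A C nA nC.
have nAq : nbhs z (fun w => D w -> A (q w)).
  by move/subspace_continuousP: quotient_within_continuous => /(_ z Dz A nA).
have FC : (qrep @ F) (qrep @` C) by apply: filterS (Fk _ nC) => k' Ck'; exists k'.
have [_ [[k' Ck' <-] /(_ (qrepP k'))]] := clz _ _ FC nAq.
by rewrite qrepK => Ak'; exists k'.
Qed.

(* Compactness of [D] replaces the tube lemma: a filter witnessing a
   discontinuity lifts along [qrep] to a filter with a cluster point in [D]. *)
Lemma continuous_quotient_lift {X Y : topologicalType} (S : X -> K -> Y)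
    (Sig : X * Z -> Y) :
  compact D -> hausdorff_space K -> continuous Sig ->
  (forall x z, D z -> S x (q z) = Sig (x, z)) ->
  continuous (fun xk : X * K => S xk.1 xk.2).
Proof.
move=> cD hK cSig SqE [x0 k0] W nW; apply: contrapT => notW.
set P := (fun xk : X * K => S xk.1 xk.2) @^-1` W.
have clP : closure (~` P) (x0, k0).
  move=> N nN; apply: contrapT => noN; apply: notW.
  by apply: filterS nN => xk Nxk; apply: contrapT => nPxk; apply: noN; exists xk.
pose G := within (~` P) (nbhs (x0, k0)).
have PG : ProperFilter G by exact: within_nbhs_proper.
have Gx0k0 : G --> (x0, k0) by exact: cvg_within.
have [z [Dz clz]] : exists z, D z /\ cluster ((qrep \o snd) @ G) z.
  by apply: cD; apply: (@filterE _ G) => xk; exact: qrepP.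
have Gk0 : snd @ G --> k0.
  by move=> C nC; apply: Gx0k0; exact: filter_prod2.
have qz : q z = k0 by exact: cluster_qrep Gk0 Dz clz.
have : nbhs (x0, z) (Sig @^-1` W).
  by apply: (cSig (x0, z)); rewrite -SqE // qz.
case=> -[N1 N2] /= [nN1 nN2] N12.
have GN1 : G (~` P `&` (fun xk => N1 xk.1)).
  apply: filterI; first exact: withinT.
  by apply: Gx0k0; exact: filter_prod1.
have [_ [[xk [nPxk N1xk] <-] N2xk]] :=
  clz ((qrep \o snd) @` (~` P `&` (fun xk => N1 xk.1))) _
    (filterS (fun xk Gxk => ex_intro2 _ _ xk Gxk erefl) GN1) nN2.
apply: nPxk; rewrite /P /= -(qrepK xk.2) SqE; last exact: qrepP.
exact: (N12 (xk.1, qrep xk.2)).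
Qed.

End Quotient.

(** * The action of [R^n] on [K] *)

Section Ambit.
Context {R : realType} {n : nat} {B : topologicalType} {e : 'rV[int]_n -> B}
  {hN : 'rV[int]_n -> B -> B} {K : topologicalType} {q : B * 'rV[R]_n -> K}.
Hypotheses (e_stone_cech : is_stone_cech e) (hN_cont : forall N, continuous (hN N))
  (hN_e : forall N z, hN N (e z) = e (z + N)) (q_quotient : is_h_quotient hN q).

Local Notation D := [set z : B * 'rV[R]_n | cube z.2].
Local Notation ic v := (map_mx (fun z : int => z%:~R : R) v).

Let B_hausdorff : hausdorff_space B. Proof. by case: e_stone_cech. Qed.
Let e_dense : dense (range e). Proof. by case: e_stone_cech. Qed.
Let q_onto k : exists2 z, D z & q z = k. Proof. by case: q_quotient => + _ _; apply. Qed.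
Let q_eq z w : D z -> D w -> (q z = q w <-> h_rel hN z w).
Proof. by case: q_quotient => _ + _; apply. Qed.
Let q_open (U : set K) : open U <-> exists V, open V /\ V `&` D = D `&` q @^-1` U.
Proof. by case: q_quotient => _ _; apply. Qed.
Let B_compact : compact [set: B]. Proof. by case: e_stone_cech. Qed.
Local Notation rep := (qrep q_onto).

Let e_ext_unique (f g : B -> B) : continuous f -> continuous g ->
  (forall z, f (e z) = g (e z)) -> f =1 g.
Proof.
by move=> cf cg fg; apply: (dense_continuous_eq B_hausdorff e_dense cf cg) => _ [z _ <-].
Qed.

Lemma hN0 p : hN 0 p = p.
Proof.
apply: (@e_ext_unique (hN 0) id (hN_cont 0)) => [x|z]; first exact: cvg_id.
by rewrite hN_e addr0.
Qed.

Lemma hN_comp a b p : hN a (hN b p) = hN (b + a) p.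
Proof.
apply: (@e_ext_unique (hN a \o hN b)) => [x | | z].
- by apply: continuous_comp; exact: hN_cont.
- exact: hN_cont.
- by rewrite /= !hN_e addrA.
Qed.

Lemma icD (a b : 'rV[int]_n) : ic (a + b) = ic a + ic b.
Proof. by apply/rowP => j; rewrite !mxE intrD. Qed.

Lemma ic0 : ic (0 : 'rV[int]_n) = 0.
Proof. by apply/rowP => j; rewrite !mxE. Qed.

Lemma icB (a b : 'rV[int]_n) : ic (a - b) = ic a - ic b.
Proof. by apply/rowP => j; rewrite !mxE intrB. Qed.

Lemma psiE (A : {set 'I_n}) (t : 'rV[R]_n) :
  (forall j, j \in A -> t 0 j = 1) -> psi A t = t - ic (ind_vec A).
Proof.
by move=> tA; apply/rowP => j; rewrite !mxE; case: ifP => [/tA ->|]; rewrite ?subr0.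
Qed.

(* Writing [c = 1_A - 1_A'], both points are identified with [(h_{1_A} p, psi_A t)]. *)
Lemma q_translate p t (c : 'rV[int]_n) : cube t -> cube (t - ic c) ->
  q (p, t) = q (hN c p, t - ic c).
Proof.
move=> ct ctc.
have c_unit j : c 0 j = -1 \/ c 0 j = 0 \/ c 0 j = 1.
  by apply: int_shift_unit_interval; [exact: ct | have := ctc j; rewrite !mxE].
pose A := [set j | c 0 j == 1]%SET; pose A' := [set j | c 0 j == -1]%SET.
have cE : c = ind_vec A - ind_vec A'.
  by apply/rowP => j; rewrite !mxE !inE; case: (c_unit j) => [|[|]] ->.
have tA j : j \in A -> t 0 j = 1.
  rewrite inE => /eqP cj; have := ctc j; have := ct j; rewrite !mxE cj; lra.
have tA' j : j \in A' -> (t - ic c) 0 j = 1.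
  rewrite inE => /eqP cj; have := ctc j; have := ct j; rewrite !mxE cj intrN; lra.
have t_A : h_basic hN (p, t) (hN (ind_vec A) p, psi A t) by exists A.
have tc_A : h_basic hN (hN c p, t - ic c) (hN (ind_vec A) p, psi A t).
  exists A'; split => //=; split; first by rewrite hN_comp cE subrK.
  by rewrite !psiE // -addrA -opprD -icD cE subrK.
apply/q_eq => //; apply: rst_trans; first exact: rst_step t_A.
exact/rst_sym/rst_step.
Qed.

Lemma cube_fpart (t : 'rV[R]_n) : cube (fpart t).
Proof.
move=> j; rewrite !mxE; have /andP[h1 h2] := floor_itv (t 0 j).
rewrite intrD in h2; apply/andP; split; lra.
Qed.

Lemma fpart_lt1 (t : 'rV[R]_n) j : fpart t 0 j < 1.
Proof.
rewrite !mxE; have /andP[_ h2] := floor_itv (t 0 j).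
rewrite intrD in h2; lra.
Qed.

Definition qext (z : B * 'rV[R]_n) : K := q (hN (ipart z.2) z.1, fpart z.2).

Lemma qext_chart p t a : cube (t - ic a) -> qext (p, t) = q (hN a p, t - ic a).
Proof.
move=> ca; have taE : fpart t - ic (a - ipart t) = t - ic a.
  by rewrite /fpart icB opprB addrA subrK.
rewrite /qext /= (q_translate _ _ (a - ipart t)).
- by rewrite hN_comp addrC subrK taE.
- exact: cube_fpart.
- by rewrite taE.
Qed.

Lemma qext_shift p t b : qext (hN b p, t - ic b) = qext (p, t).
Proof.
rewrite (qext_chart p t (b + ipart (t - ic b))).
  by rewrite /qext /= hN_comp /fpart icD opprD addrA.
by rewrite icD opprD addrA; exact: cube_fpart.
Qed.

Lemma qext_cube z : cube z.2 -> qext z = q z.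
Proof. by case: z => p t ct; rewrite (qext_chart p t 0) ic0 subr0 ?hN0. Qed.

Lemma qext_h_rel z w : h_rel hN z w ->
  forall x, qext (z.1, z.2 + x) = qext (w.1, w.2 + x).
Proof.
elim=> [{}z {}w [A [tA [-> ->]]] | // | {}z {}w _ IH | {}z {}w y _ IH1 _ IH2] x.
- by rewrite psiE // addrAC qext_shift.
- by rewrite IH.
- by rewrite IH1 IH2.
Qed.

(* [rep] picks an arbitrary representative; [sigma_q] shows the choice is irrelevant. *)
Definition sigma (x : 'rV[R]_n) (k : K) : K := qext ((rep k).1, (rep k).2 + x).

Lemma sigma_q x z : cube z.2 -> sigma x (q z) = qext (z.1, z.2 + x).
Proof.
by move=> cz; apply: qext_h_rel; apply/(q_eq _ _ (qrepP q_onto _) cz); rewrite qrepK.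
Qed.

Lemma sigma0 k : sigma 0 k = k.
Proof.
by rewrite /sigma addr0 -surjective_pairing qext_cube ?qrepK //; exact: (qrepP q_onto).
Qed.

Lemma sigmaD x y k : sigma (x + y) k = sigma x (sigma y k).
Proof.
rewrite [sigma y k]/sigma /qext sigma_q /=; last exact: cube_fpart.
by rewrite /fpart addrAC qext_shift /sigma (addrC x) addrA.
Qed.

Lemma cube_carry (x i : 'rV[R]_n) : cube i -> cube (i + fpart x - ic (carry x i)).
Proof.
rewrite /carry; move: (fpart x) (cube_fpart x) (fpart_lt1 x) => f cf f_lt1 ci j.
have /andP[f0 _] := cf j; have f1 := f_lt1 j; have /andP[i0 i1] := ci j.
rewrite !mxE; case: (lerP 1 (i 0 j + f 0 j)) => h /=; apply/andP; split; lra.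
Qed.

Lemma sigma_formula (x : 'rV[R]_n) p i : cube i ->
  sigma x (q (p, i)) = q (hN (ipart x + carry x i) p, i + fpart x - ic (carry x i)).
Proof.
move=> ci; have shiftE : i + x - ic (ipart x + carry x i) = i + fpart x - ic (carry x i).
  by rewrite icD opprD addrA -(addrA i) -/(fpart x).
rewrite sigma_q //= (qext_chart p (i + x) (ipart x + carry x i)) shiftE //.
exact: cube_carry.
Qed.

Lemma cube_compact : compact (@cube R n).
Proof.
have -> : @cube R n = [set v : 'rV[R]_n | forall j, [set` `[(0 : R), 1]] (v ord0 j)].
  by apply/seteqP; split => v /= cv j; have := cv j; rewrite /= in_itv.
by apply: (@rV_compact _ _ (fun=> [set` `[(0 : R), 1]])) => j; exact: segment_compact.
Qed.

Lemma cube_closed : closed (@cube R n).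
Proof. exact: compact_closed (@norm_hausdorff R 'rV[R]_n) cube_compact. Qed.

Definition chart (a : 'rV[int]_n) (z : B * 'rV[R]_n) : B * 'rV[R]_n :=
  (hN a z.1, z.2 - ic a).

Lemma chart_continuous a : continuous (chart a).
Proof.
move=> z; have c1 : (fun z : B * 'rV[R]_n => hN a z.1) @ nbhs z --> hN a z.1.
  by apply: (cvg_comp _ _ cvg_fst); exact: hN_cont.
have c2 : (fun z : B * 'rV[R]_n => z.2 - ic a) @ nbhs z --> z.2 - ic a.
  by apply: cvgB; [exact: cvg_snd | exact: cvg_cst].
exact: cvg_pair c1 c2.
Qed.

Lemma qext_within_chart a : {within [set z | cube (z.2 - ic a)], continuous qext}.
Proof.
apply: (@subspace_eq_continuous _ _ _ (q \o chart a)).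
  by move=> [p t] /set_mem ca; apply/esym/qext_chart.
exact: continuous_within_comp (chart_continuous a) _ (quotient_within_continuous q_open).
Qed.

Lemma near_chart_cover (t0 : 'rV[R]_n) :
  \forall t \near t0, exists E : {set 'I_n}, cube (t - ic (ipart t0 - ind_vec E)).
Proof.
pose f j := (Num.floor (t0 0 j))%:~R : R.
have near_j j : \forall t \near t0, ((t : 'rV[R]_n) 0 j \in `]f j - 1, f j + 1[).
  apply: (@coord_continuous R 1 n 0 j t0 (fun y => y \in `]f j - 1, f j + 1[)).
  apply: near_in_itvoo; have /andP[h1 h2] := floor_itv (t0 0 j); rewrite intrD in h2.
  by rewrite in_itv /= /f; apply/andP; split; lra.
apply: filterS (filter_forall _ near_j) => t near_t.
exists [set j | t 0 j < f j]%SET => j; have := near_t j.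
rewrite in_itv /= !mxE inE -/(f j) => /andP[h1 h2]; rewrite intrB.
by case: ltrP => /= h; rewrite ?mulr1z ?mulr0z; apply/andP; split; lra.
Qed.

Lemma qext_continuous : continuous qext.
Proof.
move=> [p0 t0].
pose C (E : {set 'I_n}) := [set z : B * 'rV[R]_n | cube (z.2 - ic (ipart t0 - ind_vec E))].
apply: (@finite_closed_cover_continuous_at _ _ _ C).
- move=> E; apply: preimage_closed cube_closed => z _.
  by apply: cvgB; [exact: cvg_snd | exact: cvg_cst].
- by move=> E; exact: qext_within_chart.
- exact: filter_prod2 (near_chart_cover t0).
Qed.

Lemma qext_translate_continuous :
  continuous (fun xz : 'rV[R]_n * (B * 'rV[R]_n) => qext (xz.2.1, xz.2.2 + xz.1)).
Proof.
move=> [x z]; apply: (continuous_comp _ (qext_continuous _)).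
have c1 : (fun xz : 'rV[R]_n * (B * 'rV[R]_n) => xz.2.1) @ nbhs (x, z) --> z.1.
  by apply: (cvg_comp _ _ cvg_snd); exact: cvg_fst.
have c2 : (fun xz : 'rV[R]_n * (B * 'rV[R]_n) => xz.2.2 + xz.1) @ nbhs (x, z) --> z.2 + x.
  by apply: cvgD; [apply: (cvg_comp _ _ cvg_snd); exact: cvg_snd | exact: cvg_fst].
exact: cvg_pair c1 c2.
Qed.

Lemma sigma_continuous x : continuous (sigma x).
Proof.
have cG : {within D, continuous (fun z : B * 'rV[R]_n => qext (z.1, z.2 + x))}.
  apply: continuous_subspaceT => z.
  have cxz : {for z, continuous (fun z : B * 'rV[R]_n => (x, z))}.
    have c1 : (fun=> x) @ nbhs z --> x by exact: cvg_cst.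
    have c2 : (fun z => z) @ nbhs z --> z by exact: cvg_id.
    exact: cvg_pair c1 c2.
  exact: continuous_comp cxz (qext_translate_continuous (x, z)).
have Gq z w : D z -> D w -> q z = q w -> qext (z.1, z.2 + x) = qext (w.1, w.2 + x).
  by move=> Dz Dw /(q_eq _ _ Dz Dw) /qext_h_rel.
by have [] := continuous_qrep_comp q_onto q_open _ cG Gq.
Qed.

Lemma D_compact : compact D.
Proof.
have -> : D = [set: B] `*` @cube R n by apply/seteqP; split => z //= [].
by apply: compact_setX; [exact: B_compact | exact: cube_compact].
Qed.

Lemma K_compact : compact [set: K].
Proof. exact: quotient_compact q_onto q_open D_compact. Qed.

Definition ctr : 'rV[R]_n := const_mx 2^-1.

Definition bump (r : R) (t : 'rV[R]_n) : R := Num.max 0 (r - `|t - ctr|).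

Lemma bump_continuous r : continuous (bump r).
Proof.
move=> t; have c0 : {for t, continuous (fun _ : 'rV[R]_n => 0 : R)}.
  exact: cst_continuous.
have c1 : (fun t : 'rV[R]_n => r - `|t - ctr|) @ nbhs t --> r - `|t - ctr|.
  apply: cvgB; first exact: cvg_cst.
  by apply: cvg_norm; apply: cvgB; [exact: cvg_id | exact: cvg_cst].
exact: continuous_max c0 c1.
Qed.

Lemma bump_ctr r : 0 <= r -> bump r ctr = r.
Proof. by move=> r0; rewrite /bump subrr normr0 subr0 max_r. Qed.

Lemma bump_far r (t : 'rV[R]_n) : r <= `|t - ctr| -> bump r t = 0.
Proof. by move=> rt; rewrite /bump max_l // subr_le0. Qed.

Lemma bump_face r (t : 'rV[R]_n) j : r <= 2^-1 -> t 0 j = 0 \/ t 0 j = 1 -> bump r t = 0.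
Proof.
move=> r_le tj; apply: bump_far; apply: le_trans r_le _.
apply: le_trans (mx_entry_norm_le (t - ctr) 0 j).
by rewrite !mxE; case: tj => ->; rewrite ?sub0r ?normrN ger0_norm; lra.
Qed.

Lemma cube_ctr : cube ctr.
Proof. by move=> j; rewrite mxE; apply/andP; split; lra. Qed.

Section BumpFunctions.
Context {g : B -> R} {r : R}.
Hypotheses (g_cont : continuous g) (r_le : r <= 2^-1).

Let G (z : B * 'rV[R]_n) := g z.1 * bump r z.2.

(* [G] vanishes on the faces of the cube, where [h] makes its identifications. *)
Lemma bump_h_rel z w : h_rel hN z w -> G z = G w.
Proof.
elim=> [{}z [p t] [A [tA [/= -> /= ->]]] | // | x y _ -> // | x y u _ -> _ -> //].
have [A0|[j jA]] := set_0Vmem A.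
  have A0E : ind_vec A = 0 by apply/rowP => j; rewrite !mxE A0 inE.
  by rewrite /G /= A0E hN0 psiE ?A0E ?ic0 ?subr0 // => j; rewrite A0 inE.
rewrite /G (@bump_face r z.2 j r_le (or_intror (tA j jA))) /= mulr0.
by rewrite (@bump_face r _ j r_le) ?mulr0 //; left; rewrite !mxE jA tA // subrr.
Qed.

Lemma bump_descends : exists2 F : K -> R, continuous F & forall z, D z -> F (q z) = G z.
Proof.
have cG : {within D, continuous G}.
  apply: continuous_subspaceT => z; apply: cvgM.
    by apply: (cvg_comp _ _ cvg_fst); exact: g_cont.
  by apply: (cvg_comp _ _ cvg_snd); exact: bump_continuous.
have Gq z w : D z -> D w -> q z = q w -> G z = G w.
  by move=> Dz Dw /(q_eq _ _ Dz Dw) /bump_h_rel.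
by have [cF FqE] := continuous_qrep_comp q_onto q_open _ cG Gq; exists (G \o rep).
Qed.

End BumpFunctions.

Lemma separate_from_ctr p k : q (p, ctr) <> k ->
  exists2 F : K -> R, continuous F & F (q (p, ctr)) <> F k.
Proof.
move=> pk; rewrite -(qrepK q_onto k) in pk *.
move: (qrepP q_onto k) pk; case: (rep k) => p' t' /= ct'.
case: (eqVneq t' ctr) => [-> pk|t'_ctr _].
  have pp' : p <> p' by move=> pp'; apply: pk; rewrite pp'.
  have [g cg gpp'] := compact_hausdorff_separating R B_compact B_hausdorff _ _ pp'.
  have [F cF FqE] := bump_descends cg (lexx (2^-1 : R)).
  exists F => //; rewrite (FqE (p, ctr) cube_ctr) (FqE (p', ctr) cube_ctr) /= bump_ctr //.
  have half_neq0 : (2^-1 : R) != 0 by rewrite invr_eq0 pnatr_eq0.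
  by move/(mulIf half_neq0).
pose r := Num.min 2^-1 `|t' - ctr|.
have r_gt0 : 0 < r by rewrite lt_min normr_gt0 subr_eq0 t'_ctr andbT; lra.
have one_cont : continuous (fun _ : B => 1 : R) by exact: cst_continuous.
have r_le : r <= 2^-1 by rewrite ge_min lexx.
have [F cF FqE] := bump_descends one_cont r_le.
exists F => //; rewrite (FqE (p, ctr) cube_ctr) (FqE (p', t') ct') /= bump_ctr ?ltW //.
by rewrite bump_far ?ge_min ?lexx ?orbT // !mul1r; apply/eqP; rewrite gt_eqF.
Qed.

Lemma K_hausdorff : hausdorff_space K.
Proof.
apply: (separating_hausdorff (@Rhausdorff R)) => k1 k2 k12.
pose s := ctr - (rep k1).2.
have k1E : sigma s k1 = q ((rep k1).1, ctr).
  by rewrite /sigma addrC subrK; apply: qext_cube; exact: cube_ctr.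
have k12' : q ((rep k1).1, ctr) <> sigma s k2.
  by rewrite -k1E => /(congr1 (sigma (- s))); rewrite -!sigmaD addNr !sigma0.
have [F cF Fne] := separate_from_ctr _ _ k12'.
exists (F \o sigma s); last by rewrite /= k1E.
by move=> k; apply: continuous_comp; [exact: sigma_continuous | exact: cF].
Qed.

Lemma orbit_dense : closure (range (fun x => sigma x (q (e 0, 0)))) = [set: K].
Proof.
apply/seteqP; split => // k _ U nU.
have nUq : nbhs (rep k) (fun z => D z -> U (q z)).
  move/subspace_continuousP: (quotient_within_continuous q_open).
  by move=> /(_ (rep k) (qrepP q_onto k) U); rewrite qrepK => /(_ nU).
move: (qrepP q_onto k) nUq; case: (rep k) => p t /= ct.
move=> [[N1 N2] /= [nN1 nN2] N12].
have [z N1z] : exists z, N1 (e z).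
  move: nN1; rewrite nbhsE => -[W [oW Wp] WN1].
  have [x [Wx [z _ ezx]]] := e_dense W (ex_intro _ p Wp) oW.
  by exists z; apply: WN1; rewrite ezx.
have ezt : U (q (e z, t)) := N12 (e z, t) (conj N1z (nbhs_singleton nN2)) ct.
exists (q (e z, t)); split => //; exists (ic z + t) => //.
have cube0 : cube (0 : 'rV[R]_n) by move=> j; rewrite mxE lexx ler01.
by rewrite sigma_q //= add0r (qext_chart _ _ z) (addrC (ic z)) addrK ?hN_e ?add0r.
Qed.

Lemma sigma_jointly_continuous : continuous (fun xk : 'rV[R]_n * K => sigma xk.1 xk.2).
Proof.
apply: (continuous_quotient_lift q_onto q_open sigma
  (fun xz : 'rV[R]_n * (B * 'rV[R]_n) => qext (xz.2.1, xz.2.2 + xz.1))).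
- exact: D_compact.
- exact: K_hausdorff.
- exact: qext_translate_continuous.
- exact: sigma_q.
Qed.

End Ambit.

Theorem lemma1 (R : realType) (n : nat) (n_ge1 : (1 <= n)%N)
  (B : topologicalType) (e : 'rV[int]_n -> B)
  (hN : 'rV[int]_n -> B -> B)
  (K : topologicalType) (q : B * 'rV[R]_n -> K) :
  is_stone_cech e ->
  (forall N, continuous (hN N)) ->
  (forall N z, hN N (e z) = e (z + N)) ->
  is_h_quotient hN q ->
  compact [set: K] /\ hausdorff_space K /\
  exists sigma : 'rV[R]_n -> K -> K,
    [/\ (forall (x : 'rV[R]_n) (p : B) (i : 'rV[R]_n), cube i ->
           sigma x (q (p, i)) =
           q (hN (ipart x + carry x i) p,
              i + fpart x - map_mx (fun z : int => z%:~R) (carry x i))),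
        continuous (fun xk : 'rV[R]_n * K => sigma xk.1 xk.2),
        (forall k, sigma 0 k = k),
        (forall x y k, sigma (x + y) k = sigma x (sigma y k)) &
        closure (range (fun x => sigma x (q (e 0, 0)))) = [set: K]].
Proof.
move=> e_sc hN_cont hN_e q_quot.
split; first exact: K_compact e_sc q_quot.
split; first exact: K_hausdorff e_sc hN_cont hN_e q_quot.
exists (sigma q_quot); split.
- exact: sigma_formula e_sc hN_cont hN_e q_quot.
- exact: sigma_jointly_continuous e_sc hN_cont hN_e q_quot.
- exact: sigma0 e_sc hN_cont hN_e q_quot.
- exact: sigmaD e_sc hN_cont hN_e q_quot.
- exact: orbit_dense e_sc hN_cont hN_e q_quot.
Qed.
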